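(* Let $D$ be the $N\times N$ matrix with all entries equal to $1/N$. For every choice model $\lambda$ on $S_N$ with $\|\lambda\|_0=k\le N$, one has $\|M(\lambda)-D\|_2\ge \sqrt{1-k/N}$. In particular, any choice model with support size $o(N)$ has $\|M(\lambda)-D\|_2\ge 1-o(1)$ as $N\to\infty$.
   Context: $S_N$ is the set of permutations of $\{1,\dots,N\}$; a choice model is a probability distribution $\lambda$ on $S_N$, $\|\lambda\|_0=|\{\sigma:\lambda(\sigma)>0\}|$, and $M_{ij}(\lambda)=\sum_{\sigma}\lambda(\sigma)\mathbf 1_{\{\sigma(i)=j\}}$. $\|A\|_2=(\sum_{i,j}A_{ij}^2)^{1/2}$. *)

From HB Require Import structures.
From mathcomp Require Import all_boot all_order all_algebra all_fingroup.
Set Implicit Arguments. Unset Strict Implicit. Unset Printing Implicit Defensive.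
Import Order.TTheory GRing.Theory Num.Theory.
Local Open Scope ring_scope.

Definition choice_model (R : numDomainType) (N : nat) (lam : {ffun 'S_N -> R}) : Prop :=
  (forall s, 0 <= lam s) /\ \sum_(s : 'S_N) lam s = 1.

Definition supp_size (R : numDomainType) (N : nat) (lam : {ffun 'S_N -> R}) : nat :=
  #|[set s : 'S_N | 0 < lam s]|.

Definition Mmat (R : numDomainType) (N : nat) (lam : {ffun 'S_N -> R}) : 'M[R]_N :=
  \matrix_(i < N, j < N) \sum_(s : 'S_N) lam s * (s i == j)%:R.

Definition Dmat (R : numFieldType) (N : nat) : 'M[R]_N :=
  \matrix_(i < N, j < N) (N%:R)^-1.

Definition frob (R : rcfType) (m n : nat) (A : 'M[R]_(m, n)) : R :=
  Num.sqrt (\sum_(i < m) \sum_(j < n) A i j ^+ 2).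

(* In row i of M(lam) only the columns s i, for s in the support of lam, can be
   nonzero, and there are at most k of them. So each row of M(lam) - D has at
   least N - k entries equal to -1/N, whence the squared Frobenius norm is at
   least N (N - k) / N^2 = 1 - k/N. *)
From HB Require Import structures.
From mathcomp Require Import all_boot all_order all_algebra all_fingroup.
Import Order.TTheory GRing.Theory Num.Theory.
Local Open Scope ring_scope.

Lemma sum_sqr_subr_ge {R : realDomainType} {n : nat} (v : 'I_n -> R) (c : R) :
  c ^+ 2 *+ #|[set j | v j == 0]| <= \sum_(j < n) (v j - c) ^+ 2.
Proof.
rewrite (bigID (mem [set j | v j == 0])) /= -sumr_const.
have -> : \sum_(j in [set j | v j == 0]) c ^+ 2
          = \sum_(j < n | j \in [set j | v j == 0]) (v j - c) ^+ 2.
  by apply: eq_bigr => j; rewrite inE => /eqP ->; rewrite sub0r sqrrN.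
by rewrite lerDl sumr_ge0 // => j _; exact: sqr_ge0.
Qed.

Lemma subDmat_mxE (R : numFieldType) (N : nat) (A : 'M[R]_N) i j :
  (A - Dmat R N) i j = A i j - N%:R^-1.
Proof. by rewrite [LHS]mxE; congr (_ + _); rewrite !mxE. Qed.

Section ChoiceModelSupport.

Variables (R : numDomainType) (N : nat) (lam : {ffun 'S_N -> R}).

Definition support : {set 'S_N} := [set s | 0 < lam s].

Hypothesis lam_ge0 : forall s, 0 <= lam s.

Lemma lam_eq0 s : s \notin support -> lam s = 0.
Proof. by rewrite inE lt_def lam_ge0 andbT negbK => /eqP. Qed.

Lemma Mmat_eq0 i j :
  j \notin [set (s : 'S_N) i | s in support] -> Mmat lam i j = 0.
Proof.
move=> jNim; rewrite mxE big1 // => s _.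
have [s_supp | /lam_eq0 -> ] := boolP (s \in support); last by rewrite mul0r.
suff /negbTE -> : s i != j by rewrite mulr0.
by apply: contraNneq jNim => <-; exact: imset_f.
Qed.

Lemma card_Mmat_row_eq0 i :
  (N - supp_size lam <= #|[set j | Mmat lam i j == 0%R]|)%N.
Proof.
set J := [set (s : 'S_N) i | s in support].
have JleS : (#|J| <= supp_size lam)%N by exact: leq_imset_card.
apply: leq_trans (leq_sub2l N JleS) _.
rewrite -{1}(card_ord N) -(cardsC J) addKn; apply: subset_leq_card.
by apply/subsetP => j; rewrite !inE => /Mmat_eq0 ->.
Qed.

Lemma supp_size_gt0 : \sum_s lam s = 1 -> (0 < supp_size lam)%N.
Proof.
move=> lam1; rewrite lt0n cards_eq0; apply/negP => /eqP supp0.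
have sum0 : \sum_s lam s = 0.
  by apply: big1 => s _; apply: lam_eq0; rewrite /support supp0 inE.
by move/eqP: (oner_neq0 R); rewrite -lam1 sum0.
Qed.

End ChoiceModelSupport.

Theorem mainTheorem3 (R : rcfType) (N k : nat) (lam : {ffun 'S_N -> R}) :
  choice_model lam -> supp_size lam = k -> (k <= N)%N ->
  Num.sqrt (1 - k%:R / N%:R) <= frob (Mmat lam - Dmat R N).
Proof.
move=> [lam_ge0 lam1] supp_k kN.
have N_gt0 : (0 < N)%N.
  by apply: leq_trans kN; rewrite -supp_k supp_size_gt0.
have N_neq0 : (N%:R : R) != 0 by rewrite pnatr_eq0 -lt0n.
have row_ge i : N%:R^-1 ^+ 2 *+ (N - k) <= \sum_j (Mmat lam - Dmat R N) i j ^+ 2.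
  under eq_bigr do rewrite subDmat_mxE.
  apply: le_trans (sum_sqr_subr_ge (Mmat lam i) _).
  by rewrite ler_pMn2l ?exprn_gt0 ?invr_gt0 ?ltr0n // -supp_k card_Mmat_row_eq0.
apply: ler_wsqrtr; apply: le_trans (ler_sum _ (fun i _ => row_ge i)).
rewrite sumr_const card_ord -mulrnA -[X in _ <= X]mulr_natr natrM natrB //.
by rewrite expr2 [X in _ <= X]mulrC -mulrA mulVKf // mulrBl mulfV.
Qed.
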